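(* Consider the patient model in the context with actions from an $(r,k)$-exploratory policy over a trajectory of length $T$, and let $N_i:=\sum_{t=1}^T\mathbf 1_{\{u_t=e_i\}}$. Let $\mathcal E_N(r,T,k)$ be the event $\{N_i>\frac{r(T-k)}{2(M+1)}\text{ for all }i=1,\dots,M\}$. Then for $\delta\in(0,1)$, $\mathbf P(\mathcal E_N(r,T,k))\geq1-\delta$ whenever $T\geq k+\frac8r(M+1)\log(M/\delta)$.
   Context: Patient model: $M\geq1$ treatments; $\mathcal U:=\{v\in\{0,1\}^M:\|v\|_0\leq1\}$ (so $|\mathcal U|=M+1$), $e_i$ basis vectors. $x_{t+1}=ax_t+b^\top u_t+c^\top d_t+w_t$, adherence $d^i_t\mid x_t,u^i_t\sim\mathrm{Bernoulli}(u^i_t\sigma(x_t+\mu_i))$, $\sigma$ the sigmoid; $x_1$ distributed as the noise. Parameters $a\in[0,\bar a]$ (known $\bar a\in(0,1)$), $\|b\|_\infty\leq\bar b$, $\|c\|_\infty\leq\bar c$, $\mu\in[-\bar\mu,\bar\mu]^M$. $x_t,u_t,d_t$ fully observed. Noise i.i.d., zero-symmetric, $\sigma_s^2$-subgaussian, bounded by $\bar w>0$, log-concave density, known variance. With $\mathcal F_t:=\sigma(x_{0:t},u_{0:t},d_{0:t},w_{0:t})$, an $(r,k)$-exploratory policy ($r\in(0,1]$, $k\in\mathbb N$) is one that in every block $\{j+1,\dots,j+k\}$, $j\geq0$, almost surely takes at least $\lceil rk\rceil$ actions drawn uniformly from $\mathcal U$ independently of $\mathcal F_{t-1}$. *)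

From HB Require Import structures.
From mathcomp Require Import all_boot all_order all_algebra.
From mathcomp Require Import all_classical all_reals all_analysis.
Set Implicit Arguments. Unset Strict Implicit. Unset Printing Implicit Defensive.
Import Order.TTheory GRing.Theory Num.Theory.
Local Open Scope classical_set_scope.
Local Open Scope ring_scope.

Definition bvec (M : nat) := {ffun 'I_M -> bool}.

Definition Uset (M : nat) : {set bvec M} :=
  finset (fun v : bvec M => (#|[pred i | v i]| <= 1)%N).

Definition evec (M : nat) (i : 'I_M) : bvec M := [ffun j => j == i].

Definition hist_gen d (Omega : measurableType d) (R : realType) (M : nat)
    (x w : nat -> Omega -> R) (u dd : nat -> Omega -> bvec M) (s : nat)
    : set (set Omega) :=
  [set A | exists n, (n <= s)%N /\
     ((exists B : set R, measurable B /\ A = x n @^-1` B) \/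
      (exists B : set R, measurable B /\ A = w n @^-1` B) \/
      (exists B : set (bvec M), A = u n @^-1` B) \/
      (exists B : set (bvec M), A = dd n @^-1` B))].

Definition hist d (Omega : measurableType d) (R : realType) (M : nat)
    (x w : nat -> Omega -> R) (u dd : nat -> Omega -> bvec M) (s : nat)
    : set (set Omega) :=
  <<s hist_gen x w u dd s >>.

(* (r,k)-exploratory policy.  xi t w = true means that the action at time t
   is an exploratory one, i.e. drawn uniformly from U independently of
   F_{t-1}; the decision to explore at time t is F_{t-1}-measurable
   (a deterministic schedule being a special case). *)
Definition exploratory d (Omega : measurableType d) (R : realType)
    (P : probability Omega R) (M : nat)
    (x w : nat -> Omega -> R) (u dd : nat -> Omega -> bvec M)
    (xi : nat -> Omega -> bool) (r : R) (k : nat) : Prop :=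
  (forall t : nat, (0 < t)%N ->
     hist x w u dd t.-1 [set om | xi t om] /\
     (forall (A : set Omega) (v : bvec M), hist x w u dd t.-1 A ->
        v \in Uset M ->
        P (A `&` [set om | xi t om] `&` u t @^-1` [set v]) =
        (P (A `&` [set om | xi t om]) * ((#|Uset M|%:R)^-1)%:E)%E)) /\
  (forall j : nat, {ae P, forall om,
     (Num.ceil (r * k%:R) <=
       (\sum_(j.+1 <= t < j + k + 1) (xi t om : nat))%N%:Z)%R}).

Definition Ncount (M : nat) Omega (u : nat -> Omega -> bvec M) (T : nat)
    (i : 'I_M) (om : Omega) : nat :=
  (\sum_(1 <= t < T.+1) (u t om == evec i : nat))%N.

Definition E_N (R : realType) (M : nat) Omega (u : nat -> Omega -> bvec M)
    (r : R) (T k : nat) : set Omega :=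
  [set om | forall i : 'I_M,
     r * (T%:R - k%:R) / (2 * (M%:R + 1)) < (Ncount u T i om)%:R].

From HB Require Import structures.
From mathcomp Require Import all_boot all_order all_algebra.
From mathcomp Require Import all_classical all_reals all_analysis.
From mathcomp Require Import ring lra.
Import Order.TTheory GRing.Theory Num.Theory.
Local Open Scope classical_set_scope.
Local Open Scope ring_scope.

(* Fix a coordinate i; let Z_t count the exploratory rounds up to time t and
   Y_t those among them that play e_i.  An exploratory action is uniform on U
   independently of the past, so it plays e_i with probability p = 1/|U| >=
   1/(M+1), and exp (c Z_t - lam Y_t) is a martingale for
   c = - ln (1 - p + p e^-lam).  This gives the Chernoff bound
   P(Y_T <= a, Z_T >= n) <= exp (lam a - c n).  The (r,k)-exploration
   condition forces Z_T >= r (T - k) almost surely, and N_i >= Y_T; with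
   lam = 1/2 the bound is exp (- r (T - k) / (8 (M + 1))) <= delta / M under
   the assumption on T, and a union bound over the M coordinates concludes. *)

Section real_probability.
Context {d : measure_display} {T : measurableType d} {R : realType}.
Variable P : probability T R.

Definition pr (A : set T) : R := fine (P A).

Lemma prE {A} : measurable A -> P A = (pr A)%:E.
Proof. by move=> mA; rewrite /pr fineK ?fin_num_measure. Qed.

Lemma pr_ge0 A : 0 <= pr A.
Proof. exact/fine_ge0/measure_ge0. Qed.

Lemma pr0 : pr set0 = 0.
Proof. by rewrite /pr measure0. Qed.

Lemma prT : pr setT = 1.
Proof. by rewrite /pr probability_setT. Qed.

Lemma pr_le {A B} : measurable A -> measurable B -> A `<=` B -> pr A <= pr B.
Proof. by move=> mA mB AB; rewrite -lee_fin -!prE // le_measure ?inE. Qed.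

Lemma pr_split {A B} : measurable A -> measurable B ->
  pr A = pr (A `&` B) + pr (A `&` ~` B).
Proof.
move=> mA mB; have mAB := measurableI _ _ mA mB.
have mAnB := measurableI _ _ mA (measurableC mB).
by apply: EFin_inj; rewrite EFinD -!prE // (measureDI P mA mB) setDE addeC.
Qed.

Lemma pr_setU_le {A B} : measurable A -> measurable B ->
  pr (A `|` B) <= pr A + pr B.
Proof.
move=> mA mB; rewrite -lee_fin EFinD -!prE //; last exact: measurableU.
exact: measureU2.
Qed.

Lemma pr_setC {A} : measurable A -> pr (~` A) = 1 - pr A.
Proof.
move=> mA; apply: EFin_inj; rewrite EFinB -!prE //; last exact: measurableC.
exact: probability_setC.
Qed.

Lemma pr_bigcup_le {I : finType} {F : I -> set T} :
  (forall i, measurable (F i)) -> pr (\bigcup_i F i) <= \sum_i pr (F i).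
Proof.
move=> mF; have -> : \bigcup_i F i = \bigcup_(i in [set i | i \in enum I]) F i.
  by apply/seteqP; split=> t [i _ Fi]; exists i; rewrite /= ?mem_enum.
rewrite -big_enum /=; elim: (enum I) => [|i s IH].
  by rewrite set_nil bigcup_set0 pr0 big_nil.
have -> : [set` i :: s] = i |` [set` s].
  by apply/predeqP => j /=; rewrite in_cons; split=> [/orP[/eqP|]|[->|->]];
    [left | right | rewrite eqxx | rewrite orbT].
have mU : measurable (\bigcup_(j in [set` s]) F j).
  by apply: fin_bigcup_measurable => //; exact: finite_seq.
rewrite bigcup_setU1 big_cons.
by apply: le_trans (pr_setU_le (mF i) mU) _; rewrite lerD2l.
Qed.

Lemma pr_setC_bigcup_ge {I : finType} {F : I -> set T} {e : R} :
  (forall i, measurable (F i)) -> (forall i, pr (F i) <= e) ->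
  1 - #|I|%:R * e <= pr (~` \bigcup_i F i).
Proof.
move=> mF F_le; rewrite pr_setC; last first.
  by apply: fin_bigcup_measurable; rewrite ?finite_finset.
rewrite lerD2l lerN2; apply: le_trans (pr_bigcup_le mF) _.
by apply: le_trans (ler_sum _ (fun i _ => F_le i)) _; rewrite sumr_const mulr_natl.
Qed.

End real_probability.

Lemma measurable_preimage_fin d (T : measurableType d) (V : finType)
    (f : T -> V) (B : set V) :
  (forall v, measurable (f @^-1` [set v])) -> measurable (f @^-1` B).
Proof.
move=> mf; have -> : f @^-1` B = \bigcup_(v in B) f @^-1` [set v].
  by apply/seteqP; split=> t /=; [exists (f t) | case=> v Bv /= ->].
by apply: fin_bigcup_measurable => [|v _]; [exact: finite_finset | exact: mf].
Qed.

Section count_to.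
Context {T : Type}.
Implicit Types (Y : nat -> T -> bool) (om : T).

Definition count_to Y t om : nat := (\sum_(1 <= s < t.+1) Y s om)%N.

Lemma count_to0 Y om : count_to Y 0 om = 0%N.
Proof. by rewrite /count_to big_geq. Qed.

Lemma count_toS Y t om : count_to Y t.+1 om = (count_to Y t om + Y t.+1 om)%N.
Proof. by rewrite /count_to big_nat_recr. Qed.

Lemma count_toD Y t n om :
  count_to Y (t + n) om = (count_to Y t om + \sum_(t.+1 <= s < t + n + 1) Y s om)%N.
Proof. by rewrite /count_to addn1 -big_cat_nat // ltnS leq_addr. Qed.

Lemma count_to_ge_blocks (R : archiRealDomainType) Y (r : R) k t om :
  (0 < k)%N -> 0 <= r ->
  (forall j, Num.ceil (r * k%:R) <= (\sum_(j.+1 <= s < j + k + 1) Y s om)%N%:Z) ->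
  r * (t%:R - k%:R) <= (count_to Y t om)%:R.
Proof.
move=> k0 r0 blocks; set q := (t %/ k)%N.
have count_blocks m : m%:R * (r * k%:R) <= (count_to Y (m * k) om)%:R.
  elim: m => [|m IH]; first by rewrite mul0r mul0n count_to0.
  rewrite mulSnr count_toD natrD -addn1 natrD mulrDl mul1r lerD //.
  by apply: le_trans (ceil_ge _) _; move: (blocks (m * k)%N); rewrite -(ler_int R).
have t_le : t%:R - k%:R <= q%:R * k%:R :> R.
  by rewrite lerBlDr -natrM -natrD ler_nat -mulSnr ltnW // ltn_ceil.
apply: (@le_trans _ _ (q%:R * (r * k%:R))); first by rewrite mulrCA ler_wpM2l.
apply: le_trans (count_blocks q) _; rewrite ler_nat.
by rewrite -(subnKC (leq_divM t k)) count_toD leq_addr.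
Qed.

End count_to.

Lemma measurable_count_to_preimage d (T : measurableType d) (Y : nat -> T -> bool) :
  (forall s, (0 < s)%N -> measurable [set om | Y s om]) ->
  forall t (B : set nat), measurable (count_to Y t @^-1` B).
Proof.
move=> mY; elim=> [|t IH] B.
  have -> : count_to Y 0 = cst 0%N by apply/funext => om; exact: count_to0.
  by rewrite preimage_cst; case: ifP.
have -> : count_to Y t.+1 @^-1` B =
    (count_to Y t @^-1` B `&` ~` [set om | Y t.+1 om]) `|`
    (count_to Y t @^-1` [set n | B n.+1] `&` [set om | Y t.+1 om]).
  apply/seteqP; split=> om /=; rewrite count_toS; case: (Y t.+1 om);
    rewrite ?addn0 ?addn1; by [right | left | case=> -[] | case=> -[]].
by apply: measurableU; apply: measurableI => //; [apply: measurableC |]; exact: mY.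
Qed.

Section chernoff_rate.
Context {R : realType}.
Implicit Types p lam : R.

(* The rate [c] making [exp (c Z - lam Y)] a martingale when each
   exploratory round hits with probability [p]. *)
Definition chernoff_rate p lam : R := - ln (1 - p + p * expR (- lam)).

Lemma expR_chernoff_rate p lam : 0 < p <= 1 ->
  expR (chernoff_rate p lam) * (1 - p + p * expR (- lam)) = 1.
Proof.
case/andP=> p0 p1; have := mulr_gt0 p0 (expR_gt0 (- lam)) => pe0.
by rewrite /chernoff_rate expRN lnK ?mulVf ?posrE ?gt_eqF //; lra.
Qed.

Lemma chernoff_rate_ge p lam : 0 < p <= 1 -> 0 <= lam ->
  p * (1 - expR (- lam)) <= chernoff_rate p lam.
Proof.
case/andP=> p0 p1 lam0; have e0 := expR_gt0 (- lam).
have e1 : expR (- lam) <= 1 by rewrite -expR0 ler_expR oppr_le0.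
rewrite /chernoff_rate lerNr.
have -> : 1 - p + p * expR (- lam) = 1 + - (p * (1 - expR (- lam))) by ring.
by rewrite le_ln1Dx //; nra.
Qed.

Lemma chernoff_rate_ge0 p lam : 0 < p <= 1 -> 0 <= lam -> 0 <= chernoff_rate p lam.
Proof.
move=> p01 lam0; apply: le_trans _ (chernoff_rate_ge _ _ p01 lam0).
case/andP: p01 => p0 _; rewrite mulr_ge0 ?(ltW p0) // subr_ge0.
by rewrite -expR0 ler_expR oppr_le0.
Qed.

Lemma expR_neg_half_le : expR (- 2^-1) <= 5 / 8 :> R.
Proof.
have e8 : 9 / 8 <= expR (8^-1) :> R by have := expR_ge1Dx (8^-1 : R); lra.
have e2 : 8 / 5 <= expR (2^-1) :> R.
  rewrite (_ : 2^-1 = 4%:R * 8^-1); last by lra.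
  rewrite expRM_natl; apply: (@le_trans _ _ ((9 / 8) ^+ 4)).
    by rewrite !exprS expr0; lra.
  by rewrite ler_pXn2r ?nnegrE ?expR_ge0 //; lra.
by rewrite expRN -[5 / 8]invf_div lef_pV2 ?posrE //; lra.
Qed.

Lemma expRN_le_inv {a b : R} : 0 < b -> ln b <= a -> expR (- a) <= b^-1.
Proof. by move=> b0 ba; rewrite -[b in b^-1]lnK ?posrE // -expRN ler_expR lerN2. Qed.

Lemma chernoff_exponent_le p (K n : R) : 0 < p <= 1 -> 1 <= p * K -> 0 <= n ->
  2^-1 * (n / (2 * K)) - chernoff_rate p 2^-1 * n <= - (n / (8 * K)).
Proof.
move=> /[dup] p01 /andP[p0 p1] pK n0.
have K0 : 0 < K by rewrite -(pmulr_rgt0 _ p0); lra.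
have c_ge : 3 / 8 * p <= chernoff_rate p 2^-1.
  apply: le_trans _ (chernoff_rate_ge _ _ p01 _) => //.
  by rewrite [_ * p]mulrC ler_pM2l //; have := @expR_neg_half_le; lra.
have pn_ge : n / K <= p * n.
  by rewrite ler_pdivrMr // -mulrA mulrCA ler_peMr // mulrC.
have : 3 / 8 * (n / K) <= chernoff_rate p 2^-1 * n.
  apply: le_trans _ (ler_wpM2r n0 c_ge); rewrite -[3 / 8 * p * n]mulrA.
  by apply: ler_wpM2l; [lra | exact: pn_ge].
have -> : n / (2 * K) = (n / K) / 2 by field; rewrite gt_eqF.
have -> : n / (8 * K) = (n / K) / 8 by field; rewrite gt_eqF.
lra.
Qed.

End chernoff_rate.

Lemma card_Uset_gt0 M : (0 < #|Uset M|)%N.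
Proof.
apply/card_gt0P; exists [ffun=> false]; rewrite inE.
by rewrite (@eq_card0 _ [pred j | ([ffun=> false] : bvec M) j]) // => j; rewrite !inE ffunE.
Qed.

Lemma card_Uset_le M : (#|Uset M| <= M.+1)%N.
Proof.
have sub : Uset M \subset [set [ffun=> false] : bvec M] :|: [set evec j | j in 'I_M].
  apply/fintype.subsetP => v; rewrite !inE => v_le1; apply/orP.
  case: (pickP [pred j | v j]) => [j vj | v0]; last first.
    by left; apply/eqP/ffunP => j; rewrite ffunE; exact: v0.
  right; apply/imsetP; exists j => //; apply/ffunP => j'; rewrite ffunE.
  case vj': (v j'); first by rewrite ((card_le1_eqP v_le1) j' j) ?inE // eqxx.
  by case: eqP => // jj'; move: vj; rewrite /= -jj' vj'.
apply: leq_trans (subset_leq_card sub) _.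
rewrite cardsU cards1 (leq_trans (leq_subr _ _)) // add1n ltnS.
by rewrite (leq_trans (leq_imset_card _ _)) // card_ord.
Qed.

Lemma inv_card_Uset_gt0_le1 (R : realFieldType) M : 0 < (#|Uset M|%:R : R)^-1 <= 1.
Proof. by rewrite invr_gt0 ltr0n card_Uset_gt0 invf_le1 ?ler1n ?ltr0n ?card_Uset_gt0. Qed.

Lemma evec_Uset {M} (i : 'I_M) : evec i \in Uset M.
Proof. by rewrite inE (@eq_card _ _ (pred1 i)) ?card1 // => j; rewrite !inE /= ffunE. Qed.

Section exploration.
Context {d : measure_display} {Omega : measurableType d} {R : realType}.
Variable P : probability Omega R.
Context {M : nat} {x w : nat -> Omega -> R} {u dd : nat -> Omega -> bvec M}.
Context {xi : nat -> Omega -> bool}.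
Hypothesis mx : forall n, measurable_fun setT (x n).
Hypothesis mw : forall n, measurable_fun setT (w n).
Hypothesis mu : forall n v, measurable (u n @^-1` [set v]).
Hypothesis mdd : forall n v, measurable (dd n @^-1` [set v]).
Hypothesis hxi : forall t : nat, (0 < t)%N ->
  hist x w u dd t.-1 [set om | xi t om] /\
  (forall (A : set Omega) (v : bvec M), hist x w u dd t.-1 A -> v \in Uset M ->
     P (A `&` [set om | xi t om] `&` u t @^-1` [set v]) =
     (P (A `&` [set om | xi t om]) * ((#|Uset M|%:R)^-1)%:E)%E).

Let hist_xi {t} (t0 : (0 < t)%N) := proj1 (hxi t t0).
Let u_uniform {t} (t0 : (0 < t)%N) := proj2 (hxi t t0).

Local Notation F := (hist x w u dd).

Lemma measurable_hist {s A} : F s A -> measurable A.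
Proof.
apply: smallest_sub; first exact: sigma_algebra_measurable.
move=> _ [n [_ [[B [mB ->]] | [[B [mB ->]] | [[B ->] | [B ->]]]]]].
- by rewrite -[_ @^-1` _]setTI; exact: mx.
- by rewrite -[_ @^-1` _]setTI; exact: mw.
- exact: measurable_preimage_fin.
- exact: measurable_preimage_fin.
Qed.

Lemma hist_mono {s s'} : (s <= s')%N -> F s `<=` F s'.
Proof.
move=> ss'; apply: sub_sigma_algebra2 => B [n [ns gen]].
by exists n; split=> //; exact: leq_trans ns ss'.
Qed.

Lemma hist_setT s : F s setT.
Proof. exact: (@measurableT _ (g_sigma_algebraType (hist_gen x w u dd s))). Qed.

Lemma hist_setI s A B : F s A -> F s B -> F s (A `&` B).
Proof. exact: (@measurableI _ (g_sigma_algebraType (hist_gen x w u dd s))). Qed.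

Lemma hist_setC s A : F s A -> F s (~` A).
Proof. exact: (@measurableC _ (g_sigma_algebraType (hist_gen x w u dd s))). Qed.

Lemma hist_u s v : F s (u s @^-1` [set v]).
Proof.
by apply: sub_sigma_algebra; exists s; split=> //; right; right; left; exists [set v].
Qed.

Lemma measurable_xi {t} : (0 < t)%N -> measurable [set om | xi t om].
Proof. by move=> t0; exact: measurable_hist (hist_xi t0). Qed.

Variable i : 'I_M.

Local Notation X t := [set om | xi t om].
Local Notation E t := (u t @^-1` [set evec i]).

Definition explored_hit t om := xi t om && (u t om == evec i).

Lemma measurable_count_to_hit t (B : set nat) : measurable (count_to explored_hit t @^-1` B).
Proof.
apply: measurable_count_to_preimage => s s0.
rewrite (_ : [set om | explored_hit s om] = X s `&` E s).
  exact: measurableI _ _ (measurable_xi s0) (mu s _).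
apply/seteqP; split=> om; rewrite /explored_hit /=.
  by case/andP=> ? /eqP.
by case=> -> ->; rewrite eqxx.
Qed.

Lemma measurable_Ncount T (B : set nat) : measurable (Ncount u T i @^-1` B).
Proof.
apply: (@measurable_count_to_preimage _ _ (fun t om => u t om == evec i)) => s _.
rewrite (_ : [set om | _] = E s); first exact: mu.
by apply/seteqP; split=> om /= /eqP.
Qed.

Section weighted_atoms.
Variable lam : R.
Let p : R := (#|Uset M|%:R)^-1.
Let c : R := chernoff_rate p lam.

Definition weight s om :=
  expR (c * (count_to xi s om)%:R - lam * (count_to explored_hit s om)%:R).

Definition split_atom t (Aw : set Omega * R) : seq (set Omega * R) :=
  [:: (Aw.1 `&` ~` X t, Aw.2);
      (Aw.1 `&` X t `&` ~` E t, Aw.2 * expR c);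
      (Aw.1 `&` X t `&` E t, Aw.2 * expR (c - lam))].

(* The atoms of the partition generated by the events [X t] and [E t], t <= s,
   each paired with the value of [weight s] on it; the discrete stand-in for
   the expectation of [weight s]. *)
Fixpoint atoms s : seq (set Omega * R) :=
  if s is s'.+1 then flatten [seq split_atom s Aw | Aw <- atoms s'] else [:: (setT, 1)].

Lemma hist_atoms {s Aw} : Aw \in atoms s -> F s Aw.1.
Proof.
elim: s Aw => [|s IH] Aw; first by rewrite inE => /eqP ->; exact: hist_setT.
case/flatten_mapP => -[A v] /IH /= /(hist_mono (leqnSn s)) FA.
have FX : F s.+1 (X s.+1) := hist_mono (leqnSn s) _ (hist_xi (ltn0Sn s)).
by rewrite !inE => /or3P[] /eqP -> /=;
  do ?[apply: hist_setI | apply: hist_setC | exact: hist_u].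
Qed.

Lemma weightS s om : weight s.+1 om =
  weight s om * expR (c * (xi s.+1 om)%:R - lam * (explored_hit s.+1 om)%:R).
Proof. by rewrite /weight !count_toS -expRD !natrD; congr expR; ring. Qed.

Lemma weight_atoms {s A v} : (A, v) \in atoms s ->
  0 < v /\ forall om, A om -> weight s om = v.
Proof.
elim: s A v => [|s IH] A v.
  rewrite inE => /eqP [-> ->]; split=> // om _.
  by rewrite /weight !count_to0 !mulr0 subr0 expR0.
case/flatten_mapP => -[B v'] /IH [v'0 wB].
rewrite !inE => /or3P[] /eqP [-> ->]; split; rewrite ?mulr_gt0 ?expR_gt0 //= => om.
- case=> /wB <- /negP/negbTE xi0.
  by rewrite weightS /explored_hit xi0 !mulr0 subr0 expR0 mulr1.
- case=> -[/wB <- xi1] /eqP/negbTE ue.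
  by rewrite weightS /explored_hit xi1 ue !mulr0 mulr1 subr0.
- by case=> -[/wB <- xi1] ue; rewrite weightS /explored_hit xi1 ue eqxx !mulr1.
Qed.

Lemma pr_split_atom t A v S : measurable A -> measurable S ->
  \sum_(Bw <- split_atom t.+1 (A, v)) pr P (Bw.1 `&` S) = pr P (A `&` S).
Proof.
move=> mA mS; have mAS := measurableI _ _ mA mS.
have mX := measurable_xi (ltn0Sn t); have mE := mu t.+1 (evec i).
rewrite !big_cons big_nil addr0 /= (pr_split P mAS mX).
rewrite (pr_split P (measurableI _ _ mAS mX) mE).
rewrite setIAC -[A `&` X t.+1 `&` ~` E t.+1 `&` S]setIAC -[A `&` X t.+1 `&` S]setIAC.
rewrite -[A `&` X t.+1 `&` E t.+1 `&` S]setIAC -[A `&` X t.+1 `&` S]setIAC.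
lra.
Qed.

Lemma pr_atoms_partition s S : measurable S ->
  pr P S = \sum_(Aw <- atoms s) pr P (Aw.1 `&` S).
Proof.
move=> mS; elim: s => [|s IH]; first by rewrite big_seq1 setTI.
rewrite big_flatten /= big_map IH; apply: eq_big_seq => -[A v] Aw.
by rewrite pr_split_atom //; exact: measurable_hist (hist_atoms Aw).
Qed.

Lemma mass_split_atom s A v : F s A ->
  \sum_(Bw <- split_atom s.+1 (A, v)) Bw.2 * pr P Bw.1 = v * pr P A.
Proof.
move=> FA; have mA := measurable_hist FA.
have mX := measurable_xi (ltn0Sn s); have mE := mu s.+1 (evec i).
have mAX := measurableI _ _ mA mX.
have hitE : pr P (A `&` X s.+1 `&` E s.+1) = p * pr P (A `&` X s.+1).
  apply: EFin_inj; rewrite EFinM -!(prE P) //; last exact: measurableI.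
  by rewrite (u_uniform (ltn0Sn s) _ _ FA (evec_Uset i)) muleC.
have hitC : pr P (A `&` X s.+1 `&` ~` E s.+1) = (1 - p) * pr P (A `&` X s.+1).
  by rewrite mulrBl mul1r -hitE (pr_split P mAX mE); ring.
rewrite !big_cons big_nil addr0 /= (pr_split P mA mX) expRD hitE hitC.
transitivity (v * pr P (A `&` ~` X s.+1) +
  v * pr P (A `&` X s.+1) * (expR c * (1 - p + p * expR (- lam)))); first ring.
by rewrite expR_chernoff_rate ?inv_card_Uset_gt0_le1 //; ring.
Qed.

Lemma atoms_mass s : \sum_(Aw <- atoms s) Aw.2 * pr P Aw.1 = 1.
Proof.
elim: s => [|s IH]; first by rewrite big_seq1 mul1r prT.
rewrite big_flatten /= big_map -[in RHS]IH; apply: eq_big_seq => -[A v] Aw.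
exact: mass_split_atom (hist_atoms Aw).
Qed.

Lemma chernoff_atoms (kappa : R) s S : measurable S ->
  (forall om, S om -> kappa <= weight s om) -> kappa * pr P S <= 1.
Proof.
move=> mS S_ge; rewrite (pr_atoms_partition s _ mS) big_distrr -(atoms_mass s) /=.
rewrite !big_seq; apply: ler_sum => -[A v] Aw /=.
have [v0 wA] := weight_atoms Aw; have mA := measurable_hist (hist_atoms Aw).
apply: (@le_trans _ _ (v * pr P (A `&` S))); last first.
  by rewrite ler_pM2l //; apply: pr_le => //; exact: measurableI.
have [-> | /set0P [om [Aom Som]]] := eqVneq (A `&` S) set0; first by rewrite pr0 !mulr0.
by rewrite ler_wpM2r ?pr_ge0 // -(wA om Aom) S_ge.
Qed.

Lemma pr_Ncount_le_chernoff T (a n : R) : 0 <= lam ->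
  {ae P, forall om, n <= (count_to xi T om)%:R} ->
  pr P [set om | (Ncount u T i om)%:R <= a] <= expR (lam * a - c * n).
Proof.
move=> lam0 [N [mN PN0 N_ge]].
have c0 : 0 <= c by apply: chernoff_rate_ge0; rewrite ?inv_card_Uset_gt0_le1.
set S := [set om | (count_to explored_hit T om)%:R <= a /\ n <= (count_to xi T om)%:R].
have mS : measurable S.
  rewrite (_ : S = count_to explored_hit T @^-1` [set m | m%:R <= a] `&`
                   count_to xi T @^-1` [set m | n <= m%:R]) //.
  apply: measurableI; first exact: measurable_count_to_hit.
  exact: measurable_count_to_preimage (fun _ => measurable_xi) T _.
have Ncount_sub : [set om | (Ncount u T i om)%:R <= a] `<=` S `|` N.
  move=> om /= Na; have [Nom | nNom] := pselect (N om); [by right | left]; split.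
    apply: le_trans Na; rewrite ler_nat; apply: leq_sum => t _.
    by rewrite /explored_hit; case: (xi t om).
  by apply: contrapT => n_gt; apply: nNom; exact: N_ge.
have mNcount := measurable_Ncount T [set m | m%:R <= a].
apply: le_trans (pr_le P mNcount (measurableU _ _ mS mN) Ncount_sub) _.
apply: le_trans (pr_setU_le P mS mN) _; rewrite /pr PN0 addr0 -/(pr P S).
have weight_ge om : S om -> expR (c * n - lam * a) <= weight T om.
  by case=> Ya Zn; rewrite ler_expR; apply: lerB; apply: ler_wpM2l.
rewrite -[_ - _]opprB expRN -(ler_pM2l (expR_gt0 (c * n - lam * a))).
rewrite mulfV ?gt_eqF ?expR_gt0 //.
exact: chernoff_atoms weight_ge.
Qed.

End weighted_atoms.

Lemma pr_Ncount_le T (n : R) : 0 <= n ->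
  {ae P, forall om, n <= (count_to xi T om)%:R} ->
  pr P [set om | (Ncount u T i om)%:R <= n / (2 * (M%:R + 1))] <=
  expR (- (n / (8 * (M%:R + 1)))).
Proof.
move=> n0 explored; have half_ge0 : 0 <= 2^-1 :> R by rewrite invr_ge0.
apply: le_trans (pr_Ncount_le_chernoff _ T _ n half_ge0 explored) _.
rewrite ler_expR; apply: chernoff_exponent_le; rewrite ?inv_card_Uset_gt0_le1 //.
by rewrite mulrC ler_pdivlMr ?ltr0n ?card_Uset_gt0 // mul1r natr1 ler_nat card_Uset_le.
Qed.

End exploration.

Lemma horizon_budget_le {R : realFieldType} {r K L : R} {k T : nat} :
  0 < r -> 0 < K -> k%:R + 8 / r * K * L <= T%:R ->
  L <= r * (T%:R - k%:R) / (8 * K).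
Proof.
move=> r0 K0 T_ge; have : 8 / r * K * L <= T%:R - k%:R by lra.
rewrite ler_pdivlMr ?mulr_gt0 // => /(ler_wpM2l (ltW r0)).
by congr (_ <= _); field; rewrite gt_eqF.
Qed.

Lemma E_N_setC_bigcup (R : realType) M Omega (u : nat -> Omega -> bvec M) (r : R) T k :
  E_N u r T k = ~` \bigcup_i
    [set om | (Ncount u T i om)%:R <= r * (T%:R - k%:R) / (2 * (M%:R + 1))].
Proof.
apply/seteqP; split=> om /=; first by move=> N_gt [i _]; rewrite /= leNgt N_gt.
by move=> N_le i; rewrite ltNge; apply/negP => Ni; apply: N_le; exists i.
Qed.

Theorem mainTheorem14 (R : realType) (d : measure_display)
    (Omega : measurableType d) (P : probability Omega R) (M : nat)
    (x w : nat -> Omega -> R) (u dd : nat -> Omega -> bvec M)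
    (xi : nat -> Omega -> bool) (r : R) (k T : nat) (delta : R) :
  (1 <= M)%N ->
  (forall n, measurable_fun setT (x n)) ->
  (forall n, measurable_fun setT (w n)) ->
  (forall n (v : bvec M), measurable (u n @^-1` [set v])) ->
  (forall n (v : bvec M), measurable (dd n @^-1` [set v])) ->
  (forall n om, u n om \in Uset M) ->
  0 < r -> r <= 1 -> (0 < k)%N ->
  exploratory P x w u dd xi r k ->
  0 < delta -> delta < 1 ->
  k%:R + 8 / r * (M%:R + 1) * ln (M%:R / delta) <= T%:R ->
  ((1 - delta)%:E <= P (E_N u r T k))%E.
Proof.
move=> M_gt0 mx mw mu mdd _ r_gt0 _ k_gt0 [hxi blocks] delta_gt0 delta_lt1 T_ge.
have K_gt0 : 0 < M%:R + 1 :> R by rewrite ltr_pwDr ?ler0n.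
pose n := r * (T%:R - k%:R).
have L_gt0 : 0 < ln (M%:R / delta).
  by rewrite ln_gt0 // ltr_pdivlMr // mul1r (lt_le_trans delta_lt1) ?ler1n.
have L_le : ln (M%:R / delta) <= n / (8 * (M%:R + 1)) :=
  horizon_budget_le r_gt0 K_gt0 T_ge.
have n_ge0 : 0 <= n.
  by apply: ltW; have := lt_le_trans L_gt0 L_le; rewrite pmulr_lgt0 // invr_gt0 mulr_gt0.
have explored : {ae P, forall om, n <= (count_to xi T om)%:R}.
  apply: filterS (ae_foralln blocks) => om blk.
  by apply: count_to_ge_blocks => //; exact: ltW.
pose bad j := [set om | (Ncount u T j om)%:R <= n / (2 * (M%:R + 1))].
have bad_le j : pr P (bad j) <= delta / M%:R.
  rewrite -invf_div; have := pr_Ncount_le P mx mw mu mdd hxi j T n n_ge0 explored.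
  by move/le_trans; apply; apply: (expRN_le_inv _ L_le); rewrite divr_gt0 ?ltr0n.
have mbad j : measurable (bad j) :=
  measurable_Ncount mu j T [set m | m%:R <= n / (2 * (M%:R + 1))].
have mU : measurable (~` \bigcup_j bad j).
  by apply: measurableC; apply: fin_bigcup_measurable; rewrite ?finite_finset.
rewrite E_N_setC_bigcup (prE P mU) lee_fin.
apply: le_trans _ (pr_setC_bigcup_ge P mbad bad_le).
by rewrite card_ord mulrC divfK // pnatr_eq0 -lt0n.
Qed.
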